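(* Let $q\in(0,1)$, let $(R_n(x;q))_{n\in\mathbb{N}_0}$ be the little $q$-Legendre polynomials, and for $x\in\mathbb{R}$ let $\alpha_x(m)=R_m(x;q)$ ($m\in\mathbb{N}_0$). Let $K:=\left\lceil\frac{\log4}{\log\frac{1}{q}}-1\right\rceil$. Then $\alpha_{1-q^n}(n+k)\neq0$ and \[\left|\frac{\alpha_{1-q^n}(n+k+1)}{\alpha_{1-q^n}(n+k)q^{k+1}}\right|<4\] for all $n\in\mathbb{N}_0$ and all $k\in\mathbb{N}_0$ with $k\ge K$. For every $n\in\mathbb{N}_0$, the sequence $(\alpha_{1-q^n}(n+k))_{k\ge K}$ oscillates around its limit $0$, i.e. $\frac{\alpha_{1-q^n}(n+k+1)}{\alpha_{1-q^n}(n+k)}<0$ for all $k\ge K$, and the sequence $(|\alpha_{1-q^n}(n+k)|)_{k\ge K}$ is strictly decreasing. Moreover, \[|\alpha_{1-q^n}(n+K+k)|\le4^kq^{\frac{(2K+k+1)k}{2}}|\alpha_{1-q^n}(n+K)|\le4^kq^{\frac{(2K+k+1)k}{2}}\] for all $n,k\in\mathbb{N}_0$.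
   Context: For $q\in(0,1)$, the little $q$-Legendre polynomials are defined by $R_0(x;q)=1$, $R_1(x;q)=(x-b_0)/a_0$ and $R_1(x;q)R_n(x;q)=a_nR_{n+1}(x;q)+b_nR_n(x;q)+c_nR_{n-1}(x;q)$ for $n\ge1$, where $a_0=\frac{1}{q+1}$, $b_0=\frac{q}{q+1}$, and for $n\ge1$: $a_n=q^n\frac{(1+q)(1-q^{n+1})}{(1-q^{2n+1})(1+q^{n+1})}$, $c_n=q^n\frac{(1+q)(1-q^n)}{(1-q^{2n+1})(1+q^n)}$, $b_n=1-a_n-c_n=\frac{(1-q^n)(1-q^{n+1})}{(1+q^n)(1+q^{n+1})}$. They are normalized by $R_n(1;q)=1$. *)

From Stdlib Require Import Reals ZArith.
Open Scope R_scope.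

(* Recurrence coefficients of the little q-Legendre polynomials. *)
Definition qa0 (q : R) : R := 1 / (q + 1).
Definition qb0 (q : R) : R := q / (q + 1).
(* for n >= 1 *)
Definition qa (q : R) (n : nat) : R :=
  q ^ n * ((1 + q) * (1 - q ^ (n + 1))) / ((1 - q ^ (2 * n + 1)) * (1 + q ^ (n + 1))).
Definition qc (q : R) (n : nat) : R :=
  q ^ n * ((1 + q) * (1 - q ^ n)) / ((1 - q ^ (2 * n + 1)) * (1 + q ^ n)).
Definition qb (q : R) (n : nat) : R :=
  ((1 - q ^ n) * (1 - q ^ (n + 1))) / ((1 + q ^ n) * (1 + q ^ (n + 1))).

Definition R1 (q x : R) : R := (x - qb0 q) / qa0 q.

(* Rpair q x n = (R_n(x;q), R_{n+1}(x;q)), using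
   R_1 R_n = a_n R_{n+1} + b_n R_n + c_n R_{n-1}  (n >= 1). *)
Fixpoint Rpair (q x : R) (n : nat) : R * R :=
  match n with
  | O => (1, R1 q x)
  | S m =>
      let (u, v) := Rpair q x m in
      (v, ((R1 q x - qb q n) * v - qc q n * u) / qa q n)
  end.

Definition qLeg (q x : R) (n : nat) : R := fst (Rpair q x n).

Definition alpha (q x : R) (m : nat) : R := qLeg q x m.

Definition Rceil (x : R) : Z := (- Int_part (- x))%Z.

(* K = ceil( log 4 / log (1/q) - 1 ); this is >= 0 for q in (0,1). *)
Definition Kq (q : R) : nat := Z.to_nat (Rceil (ln 4 / ln (1 / q) - 1)).

From Pilot Require Import Defs.
From Stdlib Require Import Reals ZArith Lra Lia Psatz.
From Coquelicot Require Import Coquelicot.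
Open Scope R_scope.

(* Put y = 1 - x.  Then R_m(x;q) = 2phi1(q^-m, q^(m+1); q; q, q y): the terminating series
   satisfies the three-term recurrence coefficientwise, and a second-order q-difference
   equation in y.  On the grid y = q^n, summation by parts against that equation makes the
   R_m orthogonal for the weights q^n, and the recurrence gives the squared norms
   q^m / (1 - q^(2m+1)).  Hence q^N R_m(1 - q^N)^2 <= q^m / (1 - q^(2m+1)), so that
   u_k = R_(N+k)(1 - q^N) tends to 0, and |u_K| <= 1 (for K = 0 via an alternating sum).
   At x = 1 - q^N the recurrence reads A u_(k+2) = (A + C - d) u_(k+1) - C u_k with
   d = (1+q) q^N and 0 < A, C <= d q^(k+1).  Once q^(k+1) <= 1/4, a ratio u_(k+1)/u_k outside
   (-4 q^(k+1), 0) would push every later ratio below -1, so |u_k| could never decrease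
   again, contradicting u_k -> 0.  The remaining claims follow by chaining the ratio bounds. *)

Lemma pow_antimono (x : R) (m n : nat) : 0 <= x <= 1 -> (m <= n)%nat -> x ^ n <= x ^ m.
Proof.
  intros hx hmn. replace n with (m + (n - m))%nat by lia. rewrite pow_add.
  assert (0 <= x ^ m) by (apply pow_le; lra).
  assert (x ^ (n - m) <= 1) by (rewrite <- (pow1 (n - m)); apply pow_incr; lra).
  nra.
Qed.

Lemma pow_add_one (x : R) (n : nat) : x ^ (n + 1) = x ^ n * x.
Proof. rewrite pow_add. simpl. ring. Qed.

Lemma pow_double_add_one (x : R) (n : nat) : x ^ (2 * n + 1) = x ^ n * x ^ n * x.
Proof. replace (2 * n + 1)%nat with (n + n + 1)%nat by lia. rewrite !pow_add. simpl. ring. Qed.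

Lemma sum_lin3 (a b c : R) (f g h : nat -> R) (M : nat) :
  sum_f_R0 (fun j => a * f j + b * g j + c * h j) M
  = a * sum_f_R0 f M + b * sum_f_R0 g M + c * sum_f_R0 h M.
Proof. induction M as [|M IH]; simpl; [ring | rewrite IH; ring]. Qed.

Lemma sum_f_R0_ge_term (a : nat -> R) (N L : nat) :
  (forall n, 0 <= a n) -> (N <= L)%nat -> a N <= sum_f_R0 a L.
Proof.
  intros ha h. induction h as [|L h IH].
  - destruct N as [|N]; simpl; [lra |]. pose proof (cond_pos_sum a N ha). lra.
  - rewrite tech5. specialize (ha (S L)). lra.
Qed.

Lemma alternating_sum_bounds (t : nat -> R) (M : nat) :
  (forall j, 0 <= t (S j) <= t j) -> 0 <= sum_f_R0 (fun j => (-1) ^ j * t j) M <= t 0%nat.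
Proof.
  revert t. induction M as [|M IH]; intros t ht.
  - pose proof (ht 0%nat). simpl. lra.
  - rewrite decomp_sum by lia. cbn [pred].
    rewrite (sum_eq _ (fun i => (-1) ^ i * t (S i) * -1)) by (intros i _; simpl; ring).
    rewrite <- scal_sum. destruct (IH (fun i => t (S i))) as [hlow hup]; [intro j; apply ht |].
    pose proof (ht 0%nat). simpl. lra.
Qed.

Lemma is_lim_seq_lin3 (a b c : R) (u v w : nat -> R) (lu lv lw : R) :
  is_lim_seq u lu -> is_lim_seq v lv -> is_lim_seq w lw ->
  is_lim_seq (fun n => a * u n + b * v n + c * w n) (a * lu + b * lv + c * lw).
Proof.
  intros hu hv hw.
  repeat apply is_lim_seq_plus'; apply is_lim_seq_mult'; auto using is_lim_seq_const.
Qed.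

Lemma is_lim_seq_pow (u : nat -> R) (l : R) (k : nat) :
  is_lim_seq u l -> is_lim_seq (fun n => u n ^ k) (l ^ k).
Proof.
  intro hu. induction k as [|k IH]; simpl.
  - apply is_lim_seq_const.
  - apply is_lim_seq_mult'; assumption.
Qed.

Lemma is_lim_seq_poly_0 (c : nat -> R) (M : nat) (u : nat -> R) :
  is_lim_seq u 0 -> is_lim_seq (fun n => sum_f_R0 (fun j => c j * u n ^ j) M) (c 0%nat).
Proof.
  intro hu. induction M as [|M IH]; simpl sum_f_R0.
  - apply (is_lim_seq_ext (fun _ => c 0%nat)); [intro; ring | apply is_lim_seq_const].
  - replace (c 0%nat) with (c 0%nat + c (S M) * 0 ^ S M) by (simpl; ring).
    apply is_lim_seq_plus'; [exact IH |].
    apply is_lim_seq_mult'; [apply is_lim_seq_const | exact (is_lim_seq_pow u 0 (S M) hu)].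
Qed.

(** * Oscillation of three-term recurrences with small coefficients *)

Lemma ratio_le_neg1 (x y : R) :
  x <> 0 -> y / x <= -1 -> y <> 0 /\ Rabs x <= Rabs y /\ -1 <= x / y.
Proof.
  intros hx hr.
  assert (hy : y <> 0) by (intro h; rewrite h in hr; unfold Rdiv in hr; lra).
  assert (E : y = y / x * x) by (field; exact hx).
  assert (Einv : y / x * (x / y) = 1) by (field; split; assumption).
  split; [exact hy | split].
  - rewrite E, Rabs_mult, (Rabs_left (y / x)) by lra.
    pose proof (Rabs_pos x). nra.
  - nra.
Qed.

Lemma ratio_inv_lower (x y t : R) :
  0 < t -> x <> 0 -> y <> 0 -> (0 <= y / x \/ y / x <= -4 * t) -> -1 / (4 * t) <= x / y.
Proof.
  intros ht hx hy hr.
  assert (Einv : y / x * (x / y) = 1) by (field; split; assumption).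
  apply (Rmult_le_reg_l (4 * t)); [lra |].
  replace (4 * t * (-1 / (4 * t))) with (-1) by (field; lra).
  destruct hr; nra.
Qed.

Lemma ratio_step (A C d s x y z : R) :
  0 < A -> A <= d * s -> 0 <= C -> C <= d * s -> 0 < s <= 1 / 4 ->
  A * z = (A + C - d) * y - C * x -> y <> 0 -> -1 / (4 * s) <= x / y ->
  z / y <= -1 / (4 * s).
Proof.
  intros hA hAs hC hCs hs E hy hxy.
  set (r := x / y) in *. set (t := z / y).
  assert (Et : A * t = A + C - d - C * r) by (unfold t, r; field_simplify_eq; [nra | exact hy]).
  assert (hr : -1 <= 4 * s * r).
  { apply (Rmult_le_compat_l (4 * s)) in hxy; [| lra].
    replace (4 * s * (-1 / (4 * s))) with (-1) in hxy by (field; lra). exact hxy. }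
  apply (Rmult_le_reg_l (4 * s)); [lra |].
  replace (4 * s * (-1 / (4 * s))) with (-1) by (field; lra).
  apply (Rmult_le_reg_l A); [exact hA |].
  nra.
Qed.

Section Oscillation.

Variables (u A C : nat -> R) (d rho : R).
Hypothesis rho_pos : 0 < rho.
Hypothesis rho_le1 : rho <= 1.
Hypothesis A_pos : forall k, 0 < A k.
Hypothesis A_le : forall k, A k <= d * rho ^ S k.
Hypothesis C_nonneg : forall k, 0 <= C k.
Hypothesis C_le : forall k, C k <= d * rho ^ S k.
Hypothesis u_rec : forall k, A k * u (S (S k)) = (A k + C k - d) * u (S k) - C k * u k.
Hypothesis u_lim : is_lim_seq u 0.
Hypothesis u_no_double_zero : forall k, u k = 0 -> u (S k) = 0 -> False.

Let rho_small (k i : nat) : rho ^ S k <= 1 / 4 -> (k <= i)%nat -> 0 < rho ^ S i <= 1 / 4.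
Proof.
  intros hk hi. split; [apply pow_lt; exact rho_pos |].
  apply (Rle_trans _ (rho ^ S k)); [apply pow_antimono; [lra | lia] | exact hk].
Qed.

Let neg_inv4_le (s : R) : 0 < s <= 1 / 4 -> -1 / (4 * s) <= -1.
Proof.
  intro hs. apply (Rmult_le_reg_l (4 * s)); [lra |].
  replace (4 * s * (-1 / (4 * s))) with (-1) by (field; lra). lra.
Qed.

Lemma oscillation_no_escape (k : nat) :
  rho ^ S k <= 1 / 4 -> u k <> 0 -> u (S k) / u k <= -1 -> False.
Proof.
  intros hk h0 hr.
  assert (grow : forall i, u (i + k)%nat <> 0 /\ u (S (i + k)) / u (i + k)%nat <= -1
                           /\ Rabs (u k) <= Rabs (u (i + k)%nat)).
  { induction i as [|i IH]; [simpl; repeat split; auto; lra |].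
    destruct IH as [hx [hxy habs]].
    destruct (ratio_le_neg1 _ _ hx hxy) as [hy [hxy_abs hyx]].
    pose proof (rho_small k (i + k) hk ltac:(lia)) as hs.
    pose proof (neg_inv4_le _ hs).
    pose proof (ratio_step _ _ d _ _ _ _ (A_pos (i + k)) (A_le (i + k)) (C_nonneg (i + k))
                  (C_le (i + k)) hs (u_rec (i + k)) hy ltac:(lra)).
    simpl. repeat split; [exact hy | lra | lra]. }
  destruct (proj2 (is_lim_seq_spec u 0) u_lim (mkposreal _ (Rabs_pos_lt _ h0))) as [N HN].
  specialize (HN (N + k)%nat ltac:(lia)). destruct (grow N) as [_ [_ habs]].
  simpl in HN. rewrite Rminus_0_r in HN. lra.
Qed.

Lemma oscillation_ratio (k : nat) :
  rho ^ S k <= 1 / 4 -> u k <> 0 /\ -4 * rho ^ S k < u (S k) / u k < 0.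
Proof.
  intro hk.
  pose proof (rho_small k k hk (le_n k)) as hs.
  pose proof (rho_small k (S k) hk ltac:(lia)) as hs'.
  pose proof (neg_inv4_le _ hs). pose proof (neg_inv4_le _ hs').
  assert (back : u (S k) <> 0 -> -1 / (4 * rho ^ S k) <= u k / u (S k) -> False).
  { intros hy hr. apply (oscillation_no_escape (S k)); [exact (proj2 hs') | exact hy |].
    pose proof (ratio_step _ _ d _ _ _ _ (A_pos k) (A_le k) (C_nonneg k) (C_le k) hs
                  (u_rec k) hy hr). lra. }
  assert (hy : u (S k) <> 0).
  { intro hy.
    assert (hz : u (S (S k)) <> 0) by (intro hz; exact (u_no_double_zero (S k) hy hz)).
    apply (oscillation_no_escape (S (S k)));
      [exact (proj2 (rho_small k (S (S k)) hk ltac:(lia))) | exact hz |].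
    assert (hr : -1 / (4 * rho ^ S (S k)) <= u (S k) / u (S (S k)))
      by (rewrite hy; unfold Rdiv; rewrite Rmult_0_l; lra).
    pose proof (ratio_step _ _ d _ _ _ _ (A_pos (S k)) (A_le (S k)) (C_nonneg (S k))
                  (C_le (S k)) hs' (u_rec (S k)) hz hr). lra. }
  assert (hx : u k <> 0).
  { intro hx. apply back; [exact hy |]. rewrite hx. unfold Rdiv. rewrite Rmult_0_l. lra. }
  assert (hout : 0 <= u (S k) / u k \/ u (S k) / u k <= -4 * rho ^ S k -> False)
    by (intro hr; apply back; [exact hy | apply ratio_inv_lower; auto; lra]).
  split; [exact hx |].
  split; apply Rnot_le_lt; intro; apply hout; [right | left]; assumption.
Qed.

End Oscillation.

Lemma ratio_abs_lt (x y c : R) : x <> 0 -> -c < y / x < 0 -> Rabs y < c * Rabs x.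
Proof.
  intros hx hr. replace y with (y / x * x) by (field; exact hx).
  rewrite Rabs_mult, (Rabs_left (y / x)) by lra.
  apply Rmult_lt_compat_r; [apply Rabs_pos_lt; exact hx | lra].
Qed.

Lemma triangular_exponent_step (K k : nat) :
  (((2 * K + S k + 1) * S k) / 2 = ((2 * K + k + 1) * k) / 2 + (K + k + 1))%nat.
Proof.
  replace ((2 * K + S k + 1) * S k)%nat with ((2 * K + k + 1) * k + (K + k + 1) * 2)%nat by lia.
  apply Nat.div_add. lia.
Qed.

Lemma abs_le_triangular_pow (v : nat -> R) (c : R) (K : nat) :
  0 <= c -> (forall k, Rabs (v (S k)) <= 4 * c ^ (K + k + 1) * Rabs (v k)) ->
  forall k, Rabs (v k) <= 4 ^ k * c ^ (((2 * K + k + 1) * k) / 2) * Rabs (v 0%nat).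
Proof.
  intros hc hstep k. induction k as [|k IH].
  - rewrite Nat.mul_0_r. simpl. lra.
  - rewrite triangular_exponent_step, pow_add.
    apply (Rle_trans _ _ _ (hstep k)).
    pose proof (pow_le c (K + k + 1) hc).
    replace (4 ^ S k * (c ^ ((2 * K + k + 1) * k / 2) * c ^ (K + k + 1)) * Rabs (v 0%nat))
      with (4 * c ^ (K + k + 1) * (4 ^ k * c ^ ((2 * K + k + 1) * k / 2) * Rabs (v 0%nat)))
      by (simpl; ring).
    apply Rmult_le_compat_l; [lra | exact IH].
Qed.

(** * Little q-Legendre polynomials as terminating 2phi1 series *)

Section LittleQLegendre.

Variable q : R.
Hypothesis q_pos : 0 < q.
Hypothesis q_lt1 : q < 1.

Lemma qpow_pos (n : nat) : 0 < q ^ n.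
Proof. exact (pow_lt q n q_pos). Qed.

Lemma qpow_le1 (n : nat) : q ^ n <= 1.
Proof. rewrite <- (pow1 n). apply pow_incr. lra. Qed.

Lemma qpow_lt1 (n : nat) : (0 < n)%nat -> q ^ n < 1.
Proof. intro hn. apply pow_lt_1_compat; [lra | exact hn]. Qed.

Lemma qpow_antimono (m n : nat) : (m <= n)%nat -> q ^ n <= q ^ m.
Proof. apply pow_antimono. lra. Qed.

Fixpoint qpoch (a : R) (j : nat) : R :=
  match j with O => 1 | S i => qpoch a i * (1 - a * q ^ i) end.

Lemma qpoch_S_shift (a : R) (j : nat) : qpoch a (S j) = (1 - a) * qpoch (a * q) j.
Proof. induction j as [|j IH]; cbn [qpoch] in *; [ring | rewrite IH; simpl; ring]. Qed.

Lemma qpoch_pos (a : R) (j : nat) : 0 <= a < 1 -> 0 < qpoch a j.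
Proof.
  intro ha. induction j as [|j IH]; cbn [qpoch]; [lra |].
  pose proof (qpow_le1 j). pose proof (qpow_pos j).
  apply Rmult_lt_0_compat; nra.
Qed.

Lemma qpoch_root (a : R) (i j : nat) : a * q ^ i = 1 -> (i < j)%nat -> qpoch a j = 0.
Proof.
  intros ha hij. induction hij as [|j hij IH]; cbn [qpoch].
  - rewrite ha. ring.
  - rewrite IH. ring.
Qed.

(* The coefficient of [y^j] in 2phi1(q^-m, q^(m+1); q; q, q y). *)
Definition qhyp_coef (m j : nat) : R :=
  qpoch (/ q ^ m) j * qpoch (q ^ S m) j * q ^ j / qpoch q j ^ 2.

Lemma qhyp_coef_0 (m : nat) : qhyp_coef m 0 = 1.
Proof. unfold qhyp_coef. simpl. field. Qed.

Lemma qhyp_coef_vanish (m j : nat) : (m < j)%nat -> qhyp_coef m j = 0.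
Proof.
  intro hj. unfold qhyp_coef. rewrite (qpoch_root (/ q ^ m) m j); [| | exact hj].
  - unfold Rdiv. ring.
  - field. apply pow_nonzero. lra.
Qed.

Lemma qhyp_coef_S (m j : nat) :
  qhyp_coef m (S j) =
  qhyp_coef m j * ((1 - / q ^ m * q ^ j) * (1 - q ^ S m * q ^ j) * q / (1 - q * q ^ j) ^ 2).
Proof.
  unfold qhyp_coef. cbn [qpoch pow].
  assert (0 < qpoch q j) by (apply qpoch_pos; lra).
  assert (q * q ^ j < 1) by (apply (qpow_lt1 (S j)); lia).
  pose proof (qpow_pos m). field. repeat split; lra.
Qed.

Lemma qhyp_coef_up (m i : nat) :
  qhyp_coef (S (S m)) (S i)
  = qhyp_coef (S m) i
    * ((1 - / q ^ S (S m)) * (1 - q ^ S (S m) * q ^ i) * (1 - q ^ S (S m) * q ^ S i)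
       * q / ((1 - q ^ S (S m)) * (1 - q * q ^ i) ^ 2)).
Proof.
  assert (0 < q ^ S (S m) < 1) by (split; [apply qpow_pos | apply qpow_lt1; lia]).
  assert (0 < qpoch q i) by (apply qpoch_pos; lra).
  assert (q * q ^ i < 1) by (apply (qpow_lt1 (S i)); lia).
  assert (E : qpoch (q ^ S (S (S m))) (S i)
              = qpoch (q ^ S (S m)) (S (S i)) / (1 - q ^ S (S m))).
  { rewrite (qpoch_S_shift (q ^ S (S m)) (S i)).
    replace (q ^ S (S m) * q) with (q ^ S (S (S m))) by (simpl; ring). field. lra. }
  unfold qhyp_coef. rewrite E, (qpoch_S_shift (/ q ^ S (S m))).
  replace (/ q ^ S (S m) * q) with (/ q ^ S m) by (simpl; field; split; [apply pow_nonzero |]; lra).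
  pose proof (qpow_pos (S m)).
  cbn [qpoch]. change (q ^ S i) with (q * q ^ i). field. repeat split; lra.
Qed.

Lemma qhyp_coef_down (m i : nat) :
  qhyp_coef m (S i)
  = qhyp_coef (S m) i
    * ((1 - / q ^ S m * q ^ i) * (1 - / q ^ S m * q ^ S i) * (1 - q ^ S m)
       * q / ((1 - / q ^ S m) * (1 - q * q ^ i) ^ 2)).
Proof.
  assert (0 < q ^ S m < 1) by (split; [apply qpow_pos | apply qpow_lt1; lia]).
  assert (1 < / q ^ S m) by (rewrite <- Rinv_1; apply Rinv_lt_contravar; lra).
  assert (0 < qpoch q i) by (apply qpoch_pos; lra).
  assert (q * q ^ i < 1) by (apply (qpow_lt1 (S i)); lia).
  assert (E : qpoch (/ q ^ m) (S i) = qpoch (/ q ^ S m) (S (S i)) / (1 - / q ^ S m)).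
  { rewrite (qpoch_S_shift (/ q ^ S m) (S i)).
    replace (/ q ^ S m * q) with (/ q ^ m) by (simpl; field; split; [apply pow_nonzero |]; lra).
    field. lra. }
  unfold qhyp_coef. rewrite E, (qpoch_S_shift (q ^ S m)).
  replace (q ^ S m * q) with (q ^ S (S m)) by (simpl; ring).
  cbn [qpoch]. change (q ^ S i) with (q * q ^ i). field. repeat split; lra.
Qed.

Lemma qhyp_coef_rec (p i : nat) :
  qa q (S p) * qhyp_coef (S (S p)) (S i) + qb q (S p) * qhyp_coef (S p) (S i)
    + qc q (S p) * qhyp_coef p (S i)
  = qhyp_coef (S p) (S i) - (1 + q) * qhyp_coef (S p) i.
Proof.
  rewrite (qhyp_coef_up p i), (qhyp_coef_down p i), (qhyp_coef_S (S p) i). unfold qa, qb, qc.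
  rewrite pow_double_add_one, pow_add_one.
  change (q ^ S (S p)) with (q * q ^ S p). change (q ^ S i) with (q * q ^ i).
  set (u := q ^ S p). set (w := q ^ i).
  assert (0 < u < 1) by (split; [apply qpow_pos | apply qpow_lt1; lia]).
  assert (0 < w) by apply qpow_pos.
  assert (q * w < 1) by (apply (qpow_lt1 (S i)); lia).
  assert (u * u * q < 1) by nra.
  field. repeat split; nra.
Qed.

Lemma qabc_sum (n : nat) : qa q (S n) + qb q (S n) + qc q (S n) = 1.
Proof.
  set (u := q ^ S n).
  assert (0 < u) by apply qpow_pos. assert (u < 1) by (apply qpow_lt1; lia).
  unfold qa, qb, qc. rewrite pow_double_add_one, pow_add_one. fold u.
  assert (u * u * q < 1) by nra.
  field. repeat split; nra.
Qed.

Lemma qa_qc_bounds (n : nat) : (1 <= n)%nat ->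
  0 < qa q n <= (1 + q) * q ^ n /\ 0 < qc q n <= (1 + q) * q ^ n.
Proof.
  intro hn. set (u := q ^ n).
  assert (0 < u) by apply qpow_pos. assert (u < 1) by (apply qpow_lt1; lia).
  unfold qa, qc. rewrite pow_double_add_one, pow_add_one. fold u.
  assert (0 < u * q < u) by (split; nra).
  assert (0 < u * u * q < u * q) by (split; nra).
  repeat split.
  - apply Rdiv_lt_0_compat; nra.
  - apply Rle_div_l; [nra |].
    assert (0 <= u * (1 + q) * (u * q + (u - u * u * q) + u * u * q * u * q))
      by (apply Rmult_le_pos; nra).
    nra.
  - apply Rdiv_lt_0_compat; nra.
  - apply Rle_div_l; [nra |].
    assert (0 <= u * (1 + q) * (u + u * u * q - u * u * q * u)) by (apply Rmult_le_pos; nra).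
    nra.
Qed.

Definition qhyp_trunc (m M : nat) (y : R) : R := sum_f_R0 (fun j => qhyp_coef m j * y ^ j) M.

(* [qhyp m y = R_m(1 - y; q)], see [alpha_qhyp]. *)
Definition qhyp (m : nat) (y : R) : R := qhyp_trunc m m y.

Lemma qhyp_trunc_stable (m M : nat) (y : R) : (m <= M)%nat -> qhyp_trunc m M y = qhyp m y.
Proof.
  intro hM. induction hM as [|M hM IH]; [reflexivity |].
  unfold qhyp_trunc in *. rewrite tech5, IH, qhyp_coef_vanish by lia. ring.
Qed.

Lemma qhyp_0 (y : R) : qhyp 0 y = 1.
Proof. unfold qhyp, qhyp_trunc. simpl. rewrite qhyp_coef_0. ring. Qed.

Lemma qhyp_1 (y : R) : qhyp 1 y = 1 - (1 + q) * y.
Proof.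
  unfold qhyp, qhyp_trunc. simpl. rewrite qhyp_coef_0, qhyp_coef_S, qhyp_coef_0. simpl.
  field. lra.
Qed.

Lemma qhyp_rec (p : nat) (y : R) :
  qa q (S p) * qhyp (S (S p)) y + qb q (S p) * qhyp (S p) y + qc q (S p) * qhyp p y
  = (1 - (1 + q) * y) * qhyp (S p) y.
Proof.
  set (A := fun m i => qhyp_coef m (S i) * y ^ S i).
  assert (Hsum : sum_f_R0 (A (S p)) (S p) - (1 + q) * (y * qhyp (S p) y)
    = qa q (S p) * sum_f_R0 (A (S (S p))) (S p) + qb q (S p) * sum_f_R0 (A (S p)) (S p)
      + qc q (S p) * sum_f_R0 (A p) (S p)).
  { unfold qhyp, qhyp_trunc. rewrite <- sum_lin3, scal_sum, scal_sum, <- minus_sum.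
    apply sum_eq. intros i _. unfold A.
    transitivity ((qhyp_coef (S p) (S i) - (1 + q) * qhyp_coef (S p) i) * y ^ S i); [simpl; ring |].
    rewrite <- qhyp_coef_rec. ring. }
  assert (Hext : forall m, (m <= S (S p))%nat -> qhyp m y = 1 + sum_f_R0 (A m) (S p)).
  { intros m hm. rewrite <- (qhyp_trunc_stable m (S (S p))) by exact hm.
    unfold qhyp_trunc. rewrite decomp_sum by lia. cbn [pred].
    rewrite qhyp_coef_0, pow_O, Rmult_1_l. reflexivity. }
  rewrite (Hext (S p)) in Hsum by lia.
  rewrite (Hext (S (S p))), (Hext (S p)), (Hext p) by lia.
  pose proof (qabc_sum p). lra.
Qed.

Lemma Rpair_qhyp (x : R) (m : nat) : Rpair q x m = (qhyp m (1 - x), qhyp (S m) (1 - x)).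
Proof.
  assert (HR1 : Defs.R1 q x = 1 - (1 + q) * (1 - x)) by (unfold Defs.R1, qb0, qa0; field; lra).
  induction m as [|m IH].
  - simpl Rpair. rewrite qhyp_0, qhyp_1, HR1. reflexivity.
  - simpl Rpair. rewrite IH, HR1. f_equal.
    destruct (qa_qc_bounds (S m) ltac:(lia)) as [[ha _] _].
    pose proof (qhyp_rec m (1 - x)). field_simplify_eq; lra.
Qed.

Lemma alpha_qhyp (x : R) (m : nat) : alpha q x m = qhyp m (1 - x).
Proof. unfold alpha, qLeg. rewrite Rpair_qhyp. reflexivity. Qed.

(** * Orthogonality on the grid 1 - q^n *)

Definition qeig (m : nat) : R := (1 - q ^ m) * (1 - q ^ (m + 1)) / q ^ m.

Lemma qhyp_coef_qdiff (m j : nat) :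
  qeig m * qhyp_coef m j
  = qhyp_coef m (S j) * ((1 - q ^ S j) + (1 - / q ^ S j))
    - qhyp_coef m j * (q * (1 - q ^ j) + (1 - / q ^ j)).
Proof.
  rewrite qhyp_coef_S. unfold qeig. rewrite pow_add_one.
  cbn [pow]. set (u := q ^ m). set (w := q ^ j).
  assert (0 < u) by apply qpow_pos. assert (0 < w) by apply qpow_pos.
  assert (q * w < 1) by (apply (qpow_lt1 (S j)); lia).
  field. repeat split; lra.
Qed.

Lemma qhyp_qdiff (m : nat) (z : R) :
  qeig m * z * qhyp m z
  = (1 - q * z) * (qhyp m z - qhyp m (q * z)) + (1 - z) * (qhyp m z - qhyp m (z / q)).
Proof.
  set (g := fun j => qhyp_coef m j * ((1 - q ^ j) + (1 - / q ^ j))).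
  set (h := fun j => qhyp_coef m j * (q * (1 - q ^ j) + (1 - / q ^ j))).
  assert (Hg : qhyp m z - qhyp m (q * z) + (qhyp m z - qhyp m (z / q))
               = z * sum_f_R0 (fun j => g (S j) * z ^ j) m).
  { transitivity (sum_f_R0 (fun j => g j * z ^ j) (S m)).
    - rewrite tech5. unfold g at 2. rewrite qhyp_coef_vanish by lia.
      unfold qhyp, qhyp_trunc. rewrite <- !minus_sum, <- plus_sum.
      transitivity (sum_f_R0 (fun j => g j * z ^ j) m); [| ring].
      apply sum_eq. intros j _. unfold g. unfold Rdiv. rewrite !Rpow_mult_distr, pow_inv.
      pose proof (qpow_pos j). field. lra.
    - rewrite decomp_sum by lia. cbn [pred]. unfold g at 1. rewrite scal_sum.
      replace (1 - q ^ 0 + (1 - / q ^ 0)) with 0 by (simpl; field).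
      rewrite Rmult_0_r, Rmult_0_l, Rplus_0_l. apply sum_eq. intros j _. simpl. ring. }
  assert (Hh : q * (qhyp m z - qhyp m (q * z)) + (qhyp m z - qhyp m (z / q))
               = sum_f_R0 (fun j => h j * z ^ j) m).
  { unfold qhyp, qhyp_trunc. rewrite <- !minus_sum, scal_sum, <- plus_sum.
    apply sum_eq. intros j _. unfold h. unfold Rdiv. rewrite !Rpow_mult_distr, pow_inv.
    pose proof (qpow_pos j). field. lra. }
  replace ((1 - q * z) * (qhyp m z - qhyp m (q * z)) + (1 - z) * (qhyp m z - qhyp m (z / q)))
    with (z * sum_f_R0 (fun j => g (S j) * z ^ j) m - z * sum_f_R0 (fun j => h j * z ^ j) m)
    by (rewrite <- Hg, <- Hh; ring).
  rewrite <- Rmult_minus_distr_l, <- minus_sum.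
  replace (qeig m * z * qhyp m z) with (z * (qeig m * qhyp m z)) by ring. f_equal.
  unfold qhyp, qhyp_trunc. rewrite scal_sum. apply sum_eq. intros j _.
  unfold g, h. rewrite (Rmult_comm _ (qeig m)), <- Rmult_assoc, qhyp_coef_qdiff. ring.
Qed.

Definition grid (m n : nat) : R := qhyp m (q ^ n).

Definition flux (m n : nat) : R := (1 - q ^ S n) * (grid m (S n) - grid m n).

Definition gram (m l L : nat) : R := sum_f_R0 (fun n => q ^ n * grid m n * grid l n) L.

Lemma qeig_grid_0 (m : nat) : qeig m * grid m 0 = - flux m 0.
Proof.
  unfold flux, grid. change (q ^ 0) with 1. rewrite pow_1.
  pose proof (qhyp_qdiff m 1) as H. rewrite !Rmult_1_r in H. lra.
Qed.

Lemma qeig_grid_S (m n : nat) :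
  qeig m * q ^ S n * grid m (S n) = flux m n - flux m (S n).
Proof.
  unfold flux, grid. rewrite qhyp_qdiff.
  replace (q ^ S n / q) with (q ^ n) by (simpl; field; lra).
  replace (q * q ^ S n) with (q ^ S (S n)) by reflexivity.
  ring.
Qed.

(* Summation by parts against the second-order q-difference equation. *)
Lemma gram_green (m l L : nat) :
  (qeig m - qeig l) * gram m l L = flux l L * grid m L - flux m L * grid l L.
Proof.
  induction L as [|L IH].
  - unfold gram. simpl sum_f_R0. simpl pow.
    transitivity ((qeig m * grid m 0) * grid l 0 - (qeig l * grid l 0) * grid m 0); [ring |].
    rewrite !qeig_grid_0. ring.
  - unfold gram. rewrite tech5. fold (gram m l L).
    transitivity ((qeig m - qeig l) * gram m l L
      + (qeig m * q ^ S L * grid m (S L)) * grid l (S L)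
      - (qeig l * q ^ S L * grid l (S L)) * grid m (S L)); [ring |].
    rewrite IH, !qeig_grid_S. unfold flux. ring.
Qed.

Lemma qpow_lim : is_lim_seq (fun n => q ^ n) 0.
Proof. apply is_lim_seq_geom. rewrite Rabs_pos_eq; lra. Qed.

Lemma grid_lim (m : nat) : is_lim_seq (grid m) 1.
Proof.
  rewrite <- (qhyp_coef_0 m). exact (is_lim_seq_poly_0 (qhyp_coef m) m _ qpow_lim).
Qed.

Lemma flux_lim (m : nat) : is_lim_seq (flux m) 0.
Proof.
  replace 0 with ((1 - 0) * (1 - 1)) by ring. unfold flux.
  apply is_lim_seq_mult'.
  - apply is_lim_seq_minus'; [apply is_lim_seq_const |].
    exact (proj1 (is_lim_seq_incr_1 _ _) qpow_lim).
  - apply is_lim_seq_minus'; [exact (proj1 (is_lim_seq_incr_1 _ _) (grid_lim m)) | apply grid_lim].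
Qed.

Lemma qeig_lt_S (m : nat) : qeig m < qeig (S m).
Proof.
  unfold qeig. rewrite !pow_add_one. set (u := q ^ m).
  replace (q ^ S m) with (q * u) by reflexivity.
  assert (0 < u) by apply qpow_pos. assert (u <= 1) by apply qpow_le1.
  assert (0 < q * u < 1) by (split; nra).
  assert (q * u * (q * u) < 1) by nra.
  assert (E : (1 - q * u) * (1 - q * u * q) / (q * u) - (1 - u) * (1 - u * q) / u
              = (1 - q) * (1 - q * u * (q * u)) / (q * u)) by (field; lra).
  assert (0 < (1 - q) * (1 - q * u * (q * u)) / (q * u)) by (apply Rdiv_lt_0_compat; nra).
  lra.
Qed.

Lemma qeig_inj (m l : nat) : m <> l -> qeig m <> qeig l.
Proof.
  assert (mono : forall m l, (m < l)%nat -> qeig m < qeig l).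
  { intros m' l' h. induction h as [|l' h IH]; [apply qeig_lt_S |].
    apply (Rlt_trans _ _ _ IH), qeig_lt_S. }
  intro h. destruct (Nat.lt_gt_cases m l) as [[H | H] _]; [exact h | |];
    apply mono in H; lra.
Qed.

Lemma gram_orth_lim (m l : nat) : m <> l -> is_lim_seq (gram m l) 0.
Proof.
  intro h. pose proof (qeig_inj m l h) as hl.
  apply (is_lim_seq_ext
           (fun L => / (qeig m - qeig l) * (flux l L * grid m L - flux m L * grid l L))).
  { intro L. rewrite <- gram_green. field. lra. }
  replace 0 with (/ (qeig m - qeig l) * (0 * 1 - 0 * 1)) by ring.
  apply is_lim_seq_mult'; [apply is_lim_seq_const |].
  apply is_lim_seq_minus'; apply is_lim_seq_mult'; auto using flux_lim, grid_lim.
Qed.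

(* The weight [1 - (1 + q) q^n] is [R_1(1 - q^n)], the multiplier in the recurrence. *)
Definition gram_x (m l L : nat) : R :=
  sum_f_R0 (fun n => q ^ n * (1 - (1 + q) * q ^ n) * grid m n * grid l n) L.

Lemma gram_x_sym (m l L : nat) : gram_x m l L = gram_x l m L.
Proof. unfold gram_x. apply sum_eq. intros n _. ring. Qed.

Lemma gram_x_0 (l L : nat) : gram_x 0 l L = gram 1 l L.
Proof.
  unfold gram_x, gram. apply sum_eq. intros n _. unfold grid. rewrite qhyp_0, qhyp_1. ring.
Qed.

Lemma gram_x_rec (p l L : nat) :
  gram_x (S p) l L
  = qa q (S p) * gram (S (S p)) l L + qb q (S p) * gram (S p) l L + qc q (S p) * gram p l L.
Proof.
  unfold gram_x, gram. rewrite <- sum_lin3. apply sum_eq. intros n _. unfold grid.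
  transitivity (q ^ n * qhyp l (q ^ n) * ((1 - (1 + q) * q ^ n) * qhyp (S p) (q ^ n))); [ring |].
  rewrite <- qhyp_rec. ring.
Qed.

Definition qnorm (m : nat) : R := q ^ m / (1 - q ^ (2 * m + 1)).

Lemma gram_0_lim : is_lim_seq (gram 0 0) (qnorm 0).
Proof.
  apply (is_lim_seq_ext (fun L => / (1 - q) * (1 - q * q ^ L))).
  { intro L. unfold gram, grid.
    rewrite (sum_eq _ (fun n => q ^ n)) by (intros n _; rewrite qhyp_0; ring).
    apply (Rmult_eq_reg_r (q - 1)); [| lra].
    rewrite GP_finite, pow_add_one. field. lra. }
  unfold qnorm. replace (q ^ 0 / (1 - q ^ (2 * 0 + 1))) with (/ (1 - q) * (1 - q * 0))
    by (simpl; field; lra).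
  apply is_lim_seq_mult'; [apply is_lim_seq_const |].
  apply is_lim_seq_minus'; [apply is_lim_seq_const |].
  apply is_lim_seq_mult'; [apply is_lim_seq_const | exact qpow_lim].
Qed.

Lemma qnorm_1 : qc q 1 * qnorm 0 = qnorm 1.
Proof.
  unfold qc, qnorm. simpl.
  assert (q * q < 1) by nra. assert (q * (q * q) < 1) by nra.
  field. repeat split; lra.
Qed.

Lemma qnorm_SS (p : nat) : qc q (S (S p)) * qnorm (S p) / qa q (S p) = qnorm (S (S p)).
Proof.
  unfold qc, qa, qnorm. rewrite !pow_double_add_one, !pow_add_one. set (u := q ^ S p).
  replace (q ^ S (S p)) with (q * u) by reflexivity.
  assert (0 < u) by apply qpow_pos. assert (u < 1) by (apply qpow_lt1; lia).
  assert (0 < q * u < 1) by (split; nra).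
  assert (0 < u * u * q < 1) by (split; nra).
  assert (0 < q * u * (q * u) < 1) by (split; nra).
  assert (0 < q * u * (q * u) * q < 1) by (split; nra).
  field. repeat split; nra.
Qed.

Lemma gram_1_lim : is_lim_seq (gram 1 1) (qnorm 1).
Proof.
  rewrite <- qnorm_1.
  apply (is_lim_seq_ext (fun L => qa q 1 * gram 2 0 L + qb q 1 * gram 1 0 L + qc q 1 * gram 0 0 L)).
  { intro L. rewrite <- gram_x_rec, gram_x_sym, gram_x_0. reflexivity. }
  replace (qc q 1 * qnorm 0) with (qa q 1 * 0 + qb q 1 * 0 + qc q 1 * qnorm 0) by ring.
  apply is_lim_seq_lin3; auto using gram_orth_lim, gram_0_lim.
Qed.

Lemma gram_SS_lim (p : nat) :
  is_lim_seq (gram (S p) (S p)) (qnorm (S p)) ->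
  is_lim_seq (gram (S (S p)) (S (S p))) (qnorm (S (S p))).
Proof.
  intro IH. rewrite <- qnorm_SS.
  destruct (qa_qc_bounds (S p) ltac:(lia)) as [[ha _] _].
  set (a := qa q (S p)).
  apply (is_lim_seq_ext (fun L => / a * gram_x (S (S p)) (S p) L
                                  + (- qb q (S p) / a) * gram (S p) (S (S p)) L
                                  + (- qc q (S p) / a) * gram p (S (S p)) L)).
  { intro L. rewrite gram_x_sym, gram_x_rec. unfold a. field. lra. }
  replace (qc q (S (S p)) * qnorm (S p) / a)
    with (/ a * (qa q (S (S p)) * 0 + qb q (S (S p)) * 0 + qc q (S (S p)) * qnorm (S p))
          + (- qb q (S p) / a) * 0 + (- qc q (S p) / a) * 0) by (unfold a; field; lra).
  apply is_lim_seq_lin3; [| apply gram_orth_lim; lia ..].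
  apply (is_lim_seq_ext (fun L => qa q (S (S p)) * gram (S (S (S p))) (S p) L
    + qb q (S (S p)) * gram (S (S p)) (S p) L + qc q (S (S p)) * gram (S p) (S p) L)).
  { intro L. rewrite gram_x_rec. reflexivity. }
  apply is_lim_seq_lin3; [apply gram_orth_lim; lia .. | exact IH].
Qed.

Lemma gram_diag_lim (m : nat) : is_lim_seq (gram m m) (qnorm m).
Proof.
  destruct m as [|p]; [exact gram_0_lim |].
  induction p as [|p IH]; [exact gram_1_lim | exact (gram_SS_lim p IH)].
Qed.

Lemma grid_sq_le_qnorm (m N : nat) : q ^ N * grid m N ^ 2 <= qnorm m.
Proof.
  assert (Hle : forall L, q ^ N * grid m N * grid m N <= gram m m (L + N)).
  { intro L. apply (sum_f_R0_ge_term (fun n => q ^ n * grid m n * grid m n)); [| lia].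
    intro n. pose proof (qpow_pos n). nra. }
  pose proof (is_lim_seq_le _ _ _ _ Hle (is_lim_seq_const _)
                (proj1 (is_lim_seq_incr_n _ N _) (gram_diag_lim m))) as H.
  simpl in H. nra.
Qed.

Lemma grid_diag_decay (N : nat) : is_lim_seq (fun j => grid j N) 0.
Proof.
  set (C := / ((1 - q) * q ^ N)).
  assert (hC : 0 < C) by (apply Rinv_0_lt_compat, Rmult_lt_0_compat; [lra | apply qpow_pos]).
  assert (Hsq : is_lim_seq (fun j => grid j N ^ 2) 0).
  { apply (is_lim_seq_le_le (fun _ => 0) _ (fun j => C * q ^ j)).
    - intro j. split; [apply pow2_ge_0 |].
      pose proof (grid_sq_le_qnorm j N) as H. unfold qnorm in H.
      pose proof (qpow_pos j). pose proof (qpow_pos N). pose proof (qpow_pos (2 * j + 1)).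
      assert (Hq : q ^ (2 * j + 1) <= q ^ 1) by (apply qpow_antimono; lia).
      rewrite pow_1 in Hq.
      assert (Hb : grid j N ^ 2 * ((1 - q) * q ^ N) <= q ^ j).
      { apply (Rmult_le_compat_r (1 - q ^ (2 * j + 1))) in H; [| lra].
        replace (q ^ j / (1 - q ^ (2 * j + 1)) * (1 - q ^ (2 * j + 1))) with (q ^ j) in H
          by (field; lra).
        pose proof (pow2_ge_0 (grid j N)). nra. }
      unfold C. apply (Rmult_le_reg_r ((1 - q) * q ^ N)); [nra |].
      replace (/ ((1 - q) * q ^ N) * q ^ j * ((1 - q) * q ^ N)) with (q ^ j)
        by (field; split; lra).
      exact Hb.
    - apply is_lim_seq_const.
    - replace (Finite 0) with (Finite (C * 0)) by (f_equal; ring).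
      apply is_lim_seq_mult'; [apply is_lim_seq_const | exact qpow_lim]. }
  apply is_lim_seq_abs_0.
  apply (is_lim_seq_ext (fun j => sqrt (grid j N ^ 2))).
  { intro j. rewrite <- pow2_abs, sqrt_pow2 by apply Rabs_pos. reflexivity. }
  rewrite <- sqrt_0.
  apply (is_lim_seq_continuous sqrt); [apply continuity_pt_sqrt; lra | exact Hsq].
Qed.

(** * The sequence R_(N+k)(1 - q^N) *)

Lemma alpha_grid (N j : nat) : alpha q (1 - q ^ N) j = grid j N.
Proof. rewrite alpha_qhyp. unfold grid. f_equal. ring. Qed.

Lemma grid_rec (N p : nat) :
  qa q (S p) * grid (S (S p)) N
  = (qa q (S p) + qc q (S p) - (1 + q) * q ^ N) * grid (S p) N - qc q (S p) * grid p N.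
Proof.
  unfold grid. pose proof (qhyp_rec p (q ^ N)) as H.
  replace (qb q (S p)) with (1 - qa q (S p) - qc q (S p)) in H by (pose proof (qabc_sum p); lra).
  lra.
Qed.

Lemma grid_no_double_zero (N j : nat) : grid j N = 0 -> grid (S j) N = 0 -> False.
Proof.
  induction j as [|j IH]; intros h0 h1.
  - unfold grid in h0. rewrite qhyp_0 in h0. lra.
  - apply IH; [| exact h0].
    pose proof (grid_rec N j) as E. rewrite h0, h1 in E.
    destruct (qa_qc_bounds (S j) ltac:(lia)) as [_ [hc _]].
    apply (Rmult_eq_reg_l (qc q (S j))); lra.
Qed.

Lemma grid_ratio (N k : nat) :
  q ^ S k <= 1 / 4 ->
  grid (k + N) N <> 0 /\ -4 * q ^ S k < grid (S k + N) N / grid (k + N) N < 0.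
Proof.
  apply (oscillation_ratio (fun k => grid (k + N) N) (fun k => qa q (S (k + N)))
           (fun k => qc q (S (k + N))) ((1 + q) * q ^ N) q); try lra.
  - intro i. apply qa_qc_bounds. lia.
  - intro i. replace ((1 + q) * q ^ N * q ^ S i) with ((1 + q) * q ^ (S i + N))
      by (rewrite pow_add; ring). apply qa_qc_bounds. lia.
  - intro i. apply Rlt_le, qa_qc_bounds. lia.
  - intro i. replace ((1 + q) * q ^ N * q ^ S i) with ((1 + q) * q ^ (S i + N))
      by (rewrite pow_add; ring). apply qa_qc_bounds. lia.
  - intro i. apply grid_rec.
  - exact (proj1 (is_lim_seq_incr_n _ N _) (grid_diag_decay N)).
  - intro i. apply grid_no_double_zero.
Qed.

Lemma diag_ratio_bounds (N j : nat) : q <= 1 / 4 -> (j < N)%nat ->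
  0 <= (q ^ j - q ^ N) * (1 - q ^ S N * q ^ j) * q / (1 - q * q ^ j) ^ 2 <= 1.
Proof.
  intros hq hj.
  assert (q ^ N <= q ^ j) by (apply qpow_antimono; lia).
  pose proof (qpow_le1 j). pose proof (qpow_pos j). pose proof (qpow_pos N).
  pose proof (qpow_pos (S N)). pose proof (qpow_le1 (S N)).
  assert (q * q ^ j <= q) by nra.
  assert (hden : 0 < (1 - q * q ^ j) ^ 2) by (apply pow_lt; lra).
  assert (q <= (1 - q * q ^ j) ^ 2) by nra.
  assert (0 <= 1 - q ^ S N * q ^ j <= 1) by (split; nra).
  assert (0 <= (q ^ j - q ^ N) * (1 - q ^ S N * q ^ j) <= 1).
  { split; [apply Rmult_le_pos; lra |].
    apply (Rle_trans _ (1 * 1)); [apply Rmult_le_compat; lra | lra]. }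
  split.
  - apply Rdiv_le_0_compat; [apply Rmult_le_pos |]; lra.
  - apply Rle_div_l; [exact hden |]. nra.
Qed.

Lemma grid_diag_bounds (N : nat) : q <= 1 / 4 -> 0 <= grid N N <= 1.
Proof.
  intro hq.
  set (t := fun j => (-1) ^ j * qhyp_coef N j * (q ^ N) ^ j).
  assert (Et : forall j, t (S j)
    = t j * ((q ^ j - q ^ N) * (1 - q ^ S N * q ^ j) * q / (1 - q * q ^ j) ^ 2)).
  { intro j. unfold t. rewrite qhyp_coef_S.
    pose proof (qpow_pos N). assert (q * q ^ j < 1) by (apply (qpow_lt1 (S j)); lia).
    cbn [pow]. field. split; lra. }
  assert (step : forall j, 0 <= t j -> 0 <= t (S j) <= t j).
  { intros j ht. destruct (Nat.lt_ge_cases j N) as [hj | hj].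
    - rewrite Et. pose proof (diag_ratio_bounds N j hq hj). split; nra.
    - assert (t (S j) = 0) by (unfold t; rewrite qhyp_coef_vanish by lia; ring). lra. }
  assert (tnonneg : forall j, 0 <= t j).
  { induction j as [|j IH]; [unfold t; rewrite qhyp_coef_0; simpl; lra | apply step, IH]. }
  replace (grid N N) with (sum_f_R0 (fun j => (-1) ^ j * t j) N).
  - pose proof (alternating_sum_bounds t N (fun j => step j (tnonneg j))) as H.
    replace (t 0%nat) with 1 in H by (unfold t; rewrite qhyp_coef_0; simpl; ring). exact H.
  - unfold grid, qhyp, qhyp_trunc. apply sum_eq. intros j _. unfold t.
    rewrite <- !Rmult_assoc, <- pow_add. replace (j + j)%nat with (2 * j)%nat by lia.
    rewrite pow_1_even. ring.
Qed.

Lemma grid_abs_le_1 (N K : nat) : q ^ S K <= 1 / 4 -> Rabs (grid (K + N) N) <= 1.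
Proof.
  intro hK. destruct K as [|K].
  - rewrite pow_1 in hK. simpl. pose proof (grid_diag_bounds N hK).
    rewrite Rabs_pos_eq; lra.
  - set (g := grid (S K + N) N).
    pose proof (qpow_pos (S K)). pose proof (qpow_pos N).
    assert (hK2 : q ^ S K <= 1 / 2).
    { change (q ^ S (S K)) with (q * q ^ S K) in hK.
      destruct (Rle_or_lt q (1 / 2)); [| nra].
      pose proof (qpow_antimono 1 (S K) ltac:(lia)). rewrite pow_1 in *. lra. }
    assert (He : q ^ (2 * (S K + N) + 1) <= q ^ S K * q ^ S (S K))
      by (rewrite <- pow_add; apply qpow_antimono; lia).
    pose proof (qpow_pos (2 * (S K + N) + 1)). pose proof (qpow_pos (S (S K))).
    pose proof (grid_sq_le_qnorm (S K + N) N) as Hn. unfold qnorm in Hn. fold g in Hn.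
    rewrite pow_add in Hn.
    assert (Hg : q ^ N * (g ^ 2 * (1 - q ^ (2 * (S K + N) + 1))) <= q ^ N * q ^ S K).
    { apply (Rmult_le_compat_r (1 - q ^ (2 * (S K + N) + 1))) in Hn; [| nra].
      replace (q ^ S K * q ^ N / (1 - q ^ (2 * (S K + N) + 1)) * (1 - q ^ (2 * (S K + N) + 1)))
        with (q ^ N * q ^ S K) in Hn by (field; nra).
      lra. }
    apply Rmult_le_reg_l in Hg; [| lra].
    assert (q ^ (2 * (S K + N) + 1) <= 1 / 8) by nra.
    pose proof (pow2_ge_0 g). assert (g ^ 2 <= 1) by nra.
    rewrite <- pow2_abs in *. pose proof (Rabs_pos g). nra.
Qed.

Lemma Kq_spec : q ^ S (Kq q) <= 1 / 4.
Proof.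
  unfold Kq. set (r := ln 4 / ln (1 / q) - 1).
  assert (hl : 0 < ln (1 / q)).
  { rewrite <- ln_1. apply ln_increasing; [lra |].
    apply (Rmult_lt_reg_r q); [lra |]. replace (1 / q * q) with 1 by (field; lra). lra. }
  assert (hK : r <= INR (Z.to_nat (Rceil r))).
  { assert (hc : r <= IZR (Rceil r)).
    { unfold Rceil. rewrite opp_IZR. destruct (base_Int_part (- r)). lra. }
    destruct (Z_lt_le_dec (Rceil r) 0) as [h | h].
    - apply IZR_lt in h. pose proof (pos_INR (Z.to_nat (Rceil r))). lra.
    - rewrite INR_IZR_INZ, Z2Nat.id; assumption. }
  set (K := Z.to_nat (Rceil r)) in *.
  assert (h4 : ln 4 <= (INR K + 1) * ln (1 / q)).
  { unfold r in hK. apply (Rmult_le_compat_r (ln (1 / q))) in hK; [| lra].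
    replace ((ln 4 / ln (1 / q) - 1) * ln (1 / q)) with (ln 4 - ln (1 / q)) in hK
      by (field; lra).
    lra. }
  apply Rnot_lt_le. intro h.
  pose proof (qpow_pos (S K)).
  apply ln_increasing in h; [| lra].
  rewrite ln_pow, S_INR in h by lra.
  replace (1 / q) with (/ q) in h4 by (field; lra).
  replace (1 / 4) with (/ 4) in h by lra.
  rewrite ln_Rinv in h4, h by lra.
  lra.
Qed.

Lemma Kq_small (k : nat) : (Kq q <= k)%nat -> 0 < q ^ S k <= 1 / 4.
Proof.
  intro hk. split; [apply qpow_pos |].
  apply (Rle_trans _ (q ^ S (Kq q))); [apply qpow_antimono; lia | exact Kq_spec].
Qed.

Lemma grid_ratio_K (N k : nat) : (Kq q <= k)%nat ->
  grid (N + k) N <> 0 /\ -4 * q ^ S k < grid (N + k + 1) N / grid (N + k) N < 0.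
Proof.
  intro hk. replace (N + k + 1)%nat with (S k + N)%nat by lia.
  rewrite Nat.add_comm. apply grid_ratio, Kq_small, hk.
Qed.

Lemma grid_abs_step (N k : nat) : (Kq q <= k)%nat ->
  Rabs (grid (N + k + 1) N) < 4 * q ^ S k * Rabs (grid (N + k) N).
Proof.
  intro hk. destruct (grid_ratio_K N k hk). apply ratio_abs_lt; [assumption | lra].
Qed.

Lemma grid_scaled_ratio (N k : nat) : (Kq q <= k)%nat ->
  grid (N + k) N <> 0 /\ Rabs (grid (N + k + 1) N / (grid (N + k) N * q ^ (k + 1))) < 4.
Proof.
  intro hk. destruct (grid_ratio_K N k hk) as [h0 _]. split; [exact h0 |].
  pose proof (Kq_small k hk). pose proof (grid_abs_step N k hk). pose proof (Rabs_pos_lt _ h0).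
  rewrite !Nat.add_1_r in *. unfold Rdiv.
  rewrite Rabs_mult, Rabs_inv, Rabs_mult, (Rabs_pos_eq (q ^ S k)) by lra.
  apply (Rmult_lt_reg_r (Rabs (grid (N + k) N) * q ^ S k)); [nra |].
  rewrite Rmult_assoc, Rinv_l by nra. lra.
Qed.

Lemma grid_abs_decreasing (N k : nat) : (Kq q <= k)%nat ->
  Rabs (grid (N + k + 1) N) < Rabs (grid (N + k) N).
Proof.
  intro hk. pose proof (grid_abs_step N k hk). pose proof (Kq_small k hk).
  pose proof (Rabs_pos (grid (N + k) N)). nra.
Qed.

Lemma grid_tail_decay (N : nat) : is_lim_seq (fun k => grid (N + k) N) 0.
Proof.
  apply (is_lim_seq_ext (fun k => grid (k + N) N)); [intro k; rewrite Nat.add_comm; reflexivity |].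
  exact (proj1 (is_lim_seq_incr_n _ N _) (grid_diag_decay N)).
Qed.

Lemma grid_tail_bound (N k : nat) :
  Rabs (grid (N + Kq q + k) N)
    <= 4 ^ k * q ^ (((2 * Kq q + k + 1) * k) / 2) * Rabs (grid (N + Kq q) N) /\
  4 ^ k * q ^ (((2 * Kq q + k + 1) * k) / 2) * Rabs (grid (N + Kq q) N)
    <= 4 ^ k * q ^ (((2 * Kq q + k + 1) * k) / 2).
Proof.
  set (K := Kq q).
  assert (hK : Rabs (grid (N + K) N) <= 1).
  { rewrite Nat.add_comm. apply grid_abs_le_1, Kq_small. lia. }
  assert (hfac : 0 <= 4 ^ k * q ^ ((2 * K + k + 1) * k / 2))
    by (apply Rmult_le_pos; apply pow_le; lra).
  split; [| nra].
  pose proof (abs_le_triangular_pow (fun i => grid (N + K + i) N) q K ltac:(lra)) as Hprod.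
  cbv beta in Hprod. rewrite Nat.add_0_r in Hprod. apply Hprod. intro i.
  replace (N + K + S i)%nat with (N + (K + i) + 1)%nat by lia.
  replace (N + K + i)%nat with (N + (K + i))%nat by lia.
  replace (K + i + 1)%nat with (S (K + i)) by lia.
  apply Rlt_le, grid_abs_step. lia.
Qed.

End LittleQLegendre.

Theorem lemma2p3 (q : R) (hq0 : 0 < q) (hq1 : q < 1) :
  (forall n k : nat, (Kq q <= k)%nat ->
     alpha q (1 - q ^ n) (n + k) <> 0 /\
     Rabs (alpha q (1 - q ^ n) (n + k + 1) /
           (alpha q (1 - q ^ n) (n + k) * q ^ (k + 1))) < 4) /\
  (forall n : nat, Un_cv (fun k => alpha q (1 - q ^ n) (n + k)) 0) /\
  (forall n k : nat, (Kq q <= k)%nat ->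
     alpha q (1 - q ^ n) (n + k + 1) / alpha q (1 - q ^ n) (n + k) < 0) /\
  (forall n k : nat, (Kq q <= k)%nat ->
     Rabs (alpha q (1 - q ^ n) (n + k + 1)) < Rabs (alpha q (1 - q ^ n) (n + k))) /\
  (forall n k : nat,
     Rabs (alpha q (1 - q ^ n) (n + Kq q + k))
       <= 4 ^ k * q ^ (((2 * Kq q + k + 1) * k) / 2) * Rabs (alpha q (1 - q ^ n) (n + Kq q)) /\
     4 ^ k * q ^ (((2 * Kq q + k + 1) * k) / 2) * Rabs (alpha q (1 - q ^ n) (n + Kq q))
       <= 4 ^ k * q ^ (((2 * Kq q + k + 1) * k) / 2)).
Proof.
  split; [| split; [| split; [| split]]].
  - intros n k hk. rewrite !alpha_grid by lra. exact (grid_scaled_ratio q hq0 hq1 n k hk).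
  - intro n. apply is_lim_seq_Reals.
    apply (is_lim_seq_ext (fun k => grid q (n + k) n)).
    + intro k. symmetry. apply alpha_grid; lra.
    + exact (grid_tail_decay q hq0 hq1 n).
  - intros n k hk. rewrite !alpha_grid by lra. apply (grid_ratio_K q hq0 hq1 n k hk).
  - intros n k hk. rewrite !alpha_grid by lra. exact (grid_abs_decreasing q hq0 hq1 n k hk).
  - intros n k. rewrite !alpha_grid by lra. exact (grid_tail_bound q hq0 hq1 n k).
Qed.
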